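(* Let $X$ be a real-valued semimartingale with independent increments, with deterministic differential characteristics $(b^{X[1]}_t,c^X_t,F^X_t)$ relative to an activity process $A$ and the truncation $x\mathbf 1_{\{|x|\le1\}}$. For each $t$, define $\psi:\mathbb{R}\to[-\infty,\infty)$ by $$\psi(y)=b^{X[1]}_ty-\tfrac12c^X_ty^2+\int_{\mathbb{R}}\big(g_{\mathrm{MMV}}(xy)-xy\mathbf 1_{\{|x|\le1\}}\big)F^X_t(dx).$$ Then $$\infty>\lim_{y\to\infty}\frac{\psi(y)}{y}=b^{X[1]}_t-\int_{\mathbb{R}}x\mathbf 1_{\{0<x\le1\}}F^X_t(dx)-\infty\big(\mathbf 1_{\{c^X_t>0\}}+\mathbf 1_{\{F^X_t((-\infty,0))>0\}}\big),$$ with the convention $\infty\times0=0$.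
   Context: Here $g_{\mathrm{MMV}}(x)=x\wedge1-\frac12(x\wedge1)^2$. The characteristics are understood as follows: $X-\sum_{s\le\cdot}\Delta X_s\mathbf 1_{\{|\Delta X_s|>1\}}$ has drift $b^{X[1]}\cdot A$, $\langle X^c,X^c\rangle=c^X\cdot A$, and the jump compensator is $F^X_t(dx)\,dA_t$. $F^X_t$ is a Lévy measure, i.e. $\int(x^2\wedge1)F^X_t(dx)<\infty$ and $F^X_t(\{0\})=0$. *)

From HB Require Import structures.
From mathcomp Require Import all_boot all_order all_algebra.
From mathcomp Require Import all_classical all_reals all_analysis.
Set Implicit Arguments. Unset Strict Implicit. Unset Printing Implicit Defensive.
Import Order.TTheory GRing.Theory Num.Theory.
Import numFieldNormedType.Exports.
Local Open Scope classical_set_scope.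
Local Open Scope ring_scope.

Definition gMMV {R : realType} (x : R) : R :=
  Num.min x 1 - (Num.min x 1) ^+ 2 / 2.

Definition levy_measure {R : realType}
    (F : {measure set R -> \bar R}) : Prop :=
  F [set 0] = 0%E /\
  (\int[F]_x (Num.min ((x : R) ^+ 2) 1)%:E < +oo)%E.

Definition psiX {R : realType} (b c : R)
    (F : {measure set R -> \bar R}) (y : R) : \bar R :=
  ((b * y - c * y ^+ 2 / 2)%:E +
   \int[F]_x (gMMV ((x : R) * y) - x * y * ((Num.norm x <= 1)%R : bool)%:R)%:E)%E.

Definition psi_slope_limit {R : realType} (b c : R)
    (F : {measure set R -> \bar R}) : \bar R :=
  (b%:E - \int[F]_(x in `]0%R, 1%R]) (x : R)%:E
   - (if (0 < c)%R || (0 < F [set x : R | (x < 0)%R])%E then +oo else 0))%E.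

(* For y >= 1 the positive part of the integrand of psi is 1_{x > 1} / 2, whose
   integral is finite because F is a Levy measure, so psi(y) / y is
   (b y - c y^2 / 2 + F((1, oo)) / 2) / y minus the integral of the negative part
   divided by y.  The first term tends to b, or to -oo when c > 0.  The negative
   part divided by y increases with y, to +oo on (-oo, 0), to x on [0, 1] and to 0
   on (1, oo), so by monotone convergence its integral increases to
   int_(0,1] x F(dx) + oo * 1_{F((-oo, 0)) > 0}. *)

From HB Require Import structures.
From mathcomp Require Import all_boot all_order all_algebra.
From mathcomp Require Import all_classical all_reals all_analysis.
From mathcomp Require Import ring lra measurable_realfun.
Set Implicit Arguments. Unset Strict Implicit. Unset Printing Implicit Defensive.
Import Order.TTheory GRing.Theory Num.Theory.
Import numFieldNormedType.Exports.
Local Open Scope classical_set_scope.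
Local Open Scope ring_scope.

Lemma pmulr_cvg_pinfty (R : realType) (a : R) :
  0 < a -> a * y @[y --> +oo] --> +oo.
Proof.
by move=> a0; apply/cvgryPge => A; near=> y; rewrite -ler_pdivrMl.
Unshelve. all: by end_near.
Qed.

Lemma invr_cvg0_pinfty (R : realType) : y^-1 @[y --> +oo] --> (0 : R).
Proof.
by apply/(gtr0_cvgV0 (f := id)); [exact: nbhs_pinfty_gt|exact: cvg_id].
Qed.

Lemma ge0_nondecreasing_integral_cvgy d (T : measurableType d) (R : realType)
    (mu : {measure set T -> \bar R}) (D : set T) (f : R -> T -> \bar R)
    (g : T -> \bar R) :
  measurable D ->
  (forall y, measurable_fun D (f y)) ->
  (forall y x, D x -> (0 <= f y x)%E) ->
  (forall x, D x -> {homo f^~ x : y z / y <= z >-> (y <= z)%E}) ->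
  (forall x, D x -> f y x @[y --> +oo] --> g x) ->
  (\int[mu]_(x in D) f y x)%E @[y --> +oo] --> (\int[mu]_(x in D) g x)%E.
Proof.
move=> mD mf f0 f_nd f_cvg.
pose I y := (\int[mu]_(x in D) f y x)%E.
have I_nd : {homo I : y z / y <= z >-> (y <= z)%E}.
  move=> y z yz; apply: ge0_le_integral => //.
  - by move=> x Dx; exact: f0.
  - by move=> x Dx; exact: f_nd.
have I_natr_g : I n%:R @[n --> \oo] --> (\int[mu]_(x in D) g x)%E.
  have -> : (\int[mu]_(x in D) g x = \int[mu]_(x in D) limn (fun n => f n%:R x))%E.
    apply: eq_integral => x /set_mem Dx.
    by rewrite (cvg_lim _ (cvg_comp _ _ cvgr_idn (f_cvg x Dx))).
  apply: cvg_monotone_convergence => // [n x Dx|x Dx m k mk]; first exact: f0.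
  by apply: f_nd => //; rewrite ler_nat.
suff <- : ereal_sup (range I) = (\int[mu]_(x in D) g x)%E.
  exact: nondecreasing_cvge I_nd.
exact: cvg_unique _ (cvg_comp _ _ cvgr_idn (nondecreasing_cvge I_nd)) I_natr_g.
Qed.

Section psi_integrand.
Variable R : realType.
Implicit Types x y u : R.

Lemma gMMV_le1 u : u <= 1 -> gMMV u = u - u ^+ 2 / 2.
Proof. by move=> u1; rewrite /gMMV min_l. Qed.

Lemma gMMV_ge1 u : 1 <= u -> gMMV u = 1 / 2.
Proof. by move=> u1; rewrite /gMMV min_r // expr1n; lra. Qed.

Lemma gMMV_le u : gMMV u <= u.
Proof.
have [u1|u1] := leP u 1; first by rewrite gMMV_le1 // gerBl divr_ge0 ?sqr_ge0.
by rewrite gMMV_ge1 ?ltW //; lra.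
Qed.

Lemma gMMV_ge0 u : 0 <= u -> 0 <= gMMV u.
Proof.
move=> u0; have [u1|u1] := leP u 1; last by rewrite gMMV_ge1 ?ltW.
by rewrite gMMV_le1 //; nra.
Qed.

Definition psi_integrand y x : R :=
  gMMV (x * y) - x * y * ((`|x| <= 1)%R : bool)%:R.

Lemma measurable_psi_integrand y : measurable_fun setT (psi_integrand y).
Proof.
have mxy : measurable_fun setT (fun x : R => x * y) by exact: measurable_funM.
apply: measurable_funB; first apply: measurable_funB.
- exact: measurable_minr.
- by apply: measurable_funM => //; apply: measurable_funX; exact: measurable_minr.
apply: measurable_funM => //.
rewrite (_ : (fun x : R => ((`|x| <= 1)%R : bool)%:R) =
             fun x => if `|x| <= 1 then 1 else 0).
  by apply: measurable_fun_ifT => //; exact: measurable_fun_ler.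
by apply/funext => x; case: ifP.
Qed.

Lemma psi_integrand_pos y x :
  1 <= y -> Num.max (psi_integrand y x) 0 = (1 < x)%R%:R / 2.
Proof.
move=> y1; rewrite /psi_integrand.
have [x1|x1] := ltP 1 x.
  have -> : (`|x| <= 1) = false by apply/negbTE; rewrite -ltNge ltr_normr x1.
  by rewrite gMMV_ge1 ?mulr0 ?subr0 ?max_l //; nra.
rewrite mul0r max_r //.
have := gMMV_le (x * y); case: (leP `|x| 1) => /= [_|]; first lra.
rewrite ltr_normr ltNge x1 /= => xN; have : x * y < 0 by nra.
rewrite mulr0; lra.
Qed.

Definition neg_slope y x : R :=
  if x < - 1 then x ^+ 2 * y / 2 - x
  else if x < 0 then x ^+ 2 * y / 2
  else if x <= 1 then (if x * y <= 1 then x ^+ 2 * y / 2 else x - (2 * y)^-1)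
  else 0.

Lemma psi_integrand_neg y x :
  0 < y -> Num.max (- psi_integrand y x) 0 = y * neg_slope y x.
Proof.
move=> y0; rewrite /psi_integrand /neg_slope ler_norml.
have [xN1|xN1] := ltP x (- 1).
  rewrite /= mulr0 subr0 gMMV_le1; last nra.
  by rewrite max_l; [field|nra].
rewrite /=.
have [x0|x0] := ltP x 0.
  by rewrite (ltW (lt_trans x0 ltr01)) mulr1 gMMV_le1 ?max_l; [field|nra|nra].
have [x1|x1] := leP x 1; last first.
  rewrite mulr0 subr0 mulr0 max_r // oppr_le0.
  by apply: gMMV_ge0; apply: mulr_ge0 => //; exact: ltW.
rewrite mulr1.
have [xy1|xy1] := leP (x * y) 1.
  by rewrite gMMV_le1 ?max_l; [field|nra|].
by rewrite gMMV_ge1 ?max_l; [field; rewrite gt_eqF|nra|exact: ltW].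
Qed.

Lemma neg_slope_ge0 y x : 0 < y -> 0 <= neg_slope y x.
Proof.
move=> y0; rewrite -(pmulr_rge0 _ y0) -psi_integrand_neg //.
by rewrite le_max lexx orbT.
Qed.

Lemma neg_slope_nondecreasing x y z :
  0 < y -> y <= z -> neg_slope y x <= neg_slope z x.
Proof.
move=> y0 yz; have z0 : 0 < z := lt_le_trans y0 yz.
have x2 := sqr_ge0 x; rewrite /neg_slope.
have [_|_] := ltP x (- 1); first nra.
have [_|x0] := ltP x 0; first nra.
have [_|//] := leP x 1.
have [xy|xy] := leP (x * y) 1; have [xz|xz] := leP (x * z) 1.
- nra.
- have : (2 * z)^-1 <= x / 2.
    by rewrite -div1r ler_pdivrMr ?mulr_gt0 //; nra.
  nra.
- nra.
- by rewrite lerD2l lerN2 lef_pV2 ?posrE ?mulr_gt0 //; lra.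
Qed.

Lemma neg_slope_bounds y x :
  0 < y -> 0 <= x <= 1 -> x - (2 * y)^-1 <= neg_slope y x <= x.
Proof.
move=> y0 /andP[x0 x1]; rewrite /neg_slope.
have [|_] := ltP x (- 1); first lra.
have [|_] := ltP x 0; first lra.
rewrite x1; have w0 : 0 < (2 * y)^-1 by rewrite invr_gt0 mulr_gt0.
have [xy|xy] := leP (x * y) 1; last by rewrite lexx gerBl ltW.
have wK : (2 * y)^-1 * (2 * y) = 1 by rewrite mulVf ?gt_eqF ?mulr_gt0.
have sq := sqr_ge0 (x * y - 1).
by apply/andP; split; nra.
Qed.

Lemma measurable_neg_slope y : 0 < y -> measurable_fun setT (neg_slope y).
Proof.
move=> y0.
rewrite (_ : neg_slope y = fun x => y^-1 * Num.max (- psi_integrand y x) 0).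
  apply: measurable_funM => //; apply: measurable_maxr => //.
  by apply: measurable_funN; exact: measurable_psi_integrand.
by apply/funext => x; rewrite psi_integrand_neg // mulKf ?gt_eqF.
Qed.

Definition neg_slope_lim x : \bar R :=
  if x < 0 then +oo%E else if x <= 1 then x%:E else 0%E.

Lemma neg_slope_lim_ge0 x : (0 <= neg_slope_lim x)%E.
Proof.
by rewrite /neg_slope_lim; case: ltP => // x0; case: ifP; rewrite ?lee_fin.
Qed.

Lemma measurable_neg_slope_lim : measurable_fun setT neg_slope_lim.
Proof.
apply: measurable_fun_ifT; first exact: measurable_fun_ltr.
  exact: measurable_cst.
apply: measurable_fun_ifT => //; exact: measurable_fun_ler.
Qed.

Lemma neg_slope_cvg x : (neg_slope y x)%:E @[y --> +oo] --> neg_slope_lim x.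
Proof.
rewrite /neg_slope_lim; have [x0|x0] := ltP x 0.
  have x2 : 0 < x ^+ 2 / 2 by rewrite divr_gt0 // exprn_even_gt0 //= lt_eqF.
  apply/cvgeryP/(ger_cvgy _ (pmulr_cvg_pinfty x2)).
  near=> y; have y0 : 0 < y by near: y; exact: nbhs_pinfty_gt.
  rewrite /neg_slope x0; have [_|_] := ltP x (- 1); nra.
have [x1|x1] := leP x 1; last first.
  rewrite (_ : (fun y => _) = cst 0%E); first exact: cvg_cst.
  apply/funext => y.
  by rewrite /neg_slope ltNge (le_trans _ x0) //= ltNge x0 /= leNgt x1.
apply: cvg_EFin; first exact: nearW.
apply: (@squeeze_cvgr _ _ _ _ (fun y => x - y^-1) (cst x)); last exact: cvg_cst.
  near=> y; have y0 : 0 < y by near: y; exact: nbhs_pinfty_gt.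
  have /andP[lb ->] : x - (2 * y)^-1 <= neg_slope y x <= x.
    by apply: neg_slope_bounds => //; rewrite x0 x1.
  rewrite andbT (le_trans _ lb) // lerD2l lerN2 lef_pV2 ?posrE ?mulr_gt0 //; lra.
rewrite -[x in _ --> x]subr0; apply: cvgB; [exact: cvg_cst|exact: invr_cvg0_pinfty].
Unshelve. all: by end_near.
Qed.

End psi_integrand.

Lemma drift_slope_cvg (R : realType) (b c k : R) : 0 <= c ->
  ((b * y - c * y ^+ 2 / 2 + k) / y)%:E @[y --> +oo] -->
  (if (0 < c)%R then -oo else b%:E)%E.
Proof.
move=> c0.
have bk_cvg : (b + k * y^-1)%:E @[y --> +oo] --> b%:E.
  apply: cvg_EFin; first exact: nearW.
  rewrite -[b in _ --> b]addr0 -(mulr0 k).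
  apply: cvgD; first exact: cvg_cst.
  by apply: cvgM; [exact: cvg_cst|exact: invr_cvg0_pinfty].
have quad_cvg :
    (- (c / 2 * y))%:E @[y --> +oo] --> (if (0 < c)%R then -oo else 0)%E.
  case: ltP => [c_gt0|c_le0].
    apply/cvgerNyP/(cvgNrNy (fun y => c / 2 * y)).
    by apply: pmulr_cvg_pinfty; rewrite divr_gt0.
  have -> : c = 0 by apply/le_anti; rewrite c0 c_le0.
  rewrite (_ : (fun _ => _) = cst 0%E); first exact: cvg_cst.
  by apply/funext => y; rewrite !mul0r oppr0.
have -> : (if (0 < c)%R then -oo else b%:E)%E =
          (b%:E + if (0 < c)%R then -oo else 0)%E by case: ifP; rewrite ?adde0.
apply: cvg_trans (cvgeD _ bk_cvg quad_cvg); last exact: fin_num_adde_defr.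
apply: near_eq_cvg; near=> y; have y0 : 0 < y by near: y; exact: nbhs_pinfty_gt.
by rewrite -EFinD; congr (_%:E); field; rewrite gt_eqF.
Unshelve. all: by end_near.
Qed.

Section levy_measure.
Variables (R : realType) (F : {measure set R -> \bar R}).
Local Open Scope ereal_scope.

Lemma levy_measure_tail_fin :
  levy_measure F -> F `]1%R, +oo[%classic \is a fin_num.
Proof.
move=> [_ Fint]; rewrite ge0_fin_numE //; apply: le_lt_trans Fint.
have -> : F `]1%R, +oo[%classic = \int[F]_x (\1_(`]1%R, +oo[%classic) x)%:E.
  by rewrite integral_indic //= setIT.
apply: ge0_le_integral => //.
- by apply/measurable_EFinP; apply: measurable_indic.
- by apply/measurable_EFinP; exact: measurable_minr.
move=> x _; rewrite lee_fin indicE mem_setE in_itv /= andbT.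
case: (ltrP 1 x) => x1 /=; last by rewrite le_min sqr_ge0 ler01.
rewrite le_min lexx andbT -[leLHS](expr1n _ 2).
by rewrite lerXn2r ?nnegrE ?ltW // (lt_trans _ x1).
Qed.

Lemma integral_neg_slope_lim : \int[F]_x neg_slope_lim x =
  \int[F]_(x in `]0%R, 1%R]) (x : R)%:E +
  (if 0 < F [set x : R | (x < 0)%R] then +oo else 0).
Proof.
pose N := [set x : R | (x < 0)%R].
have mN : measurable N.
  rewrite (_ : N = `]-oo, 0%R[%classic); first exact: measurable_itv.
  by apply/seteqP; split => x /=; rewrite in_itv.
rewrite -(setUv N) ge0_integral_setU //; last 4 first.
- exact: measurableC.
- by rewrite setUv; exact: measurable_neg_slope_lim.
- by move=> x _; exact: neg_slope_lim_ge0.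
- by apply/disj_set2P; rewrite setICr.
rewrite addeC; congr (_ + _).
  have itv_N : `]0%R, 1%R] `<=` ~` N.
    move=> x; rewrite /= in_itv /= => /andP[x0 _].
    by apply/negP; rewrite -leNgt ltW.
  rewrite -(setIidr itv_N) integral_mkcondr.
  apply: eq_integral => x /set_mem /negP; rewrite -leNgt => x0.
  rewrite /neg_slope_lim /patch ltNge x0 /= mem_setE in_itv /=.
  have [->|x_neq0] := eqVneq x 0%R; first by rewrite ltxx ler01.
  by rewrite lt_def x_neq0 x0; case: ifP.
transitivity (\int[F]_(x in N) (cst +oo) x).
  by apply: eq_integral => x; rewrite inE /= /neg_slope_lim => ->.
rewrite integral_cst //.
have := measure_ge0 F N; rewrite le_eqVlt => /predU1P[<-|FN0].
  by rewrite mule0 ltxx.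
by rewrite FN0 gt0_mulye.
Qed.

Lemma integral_neg_slope_cvg :
  \int[F]_x (neg_slope y x)%:E @[y --> +oo%R] --> \int[F]_x neg_slope_lim x.
Proof.
(* neg_slope y is monotone only for y > 0, hence the reparametrization by max y 1. *)
have max1_gt0 (y : R) : (0 < Num.max y 1)%R by rewrite lt_max ltr01 orbT.
have max1_cvg (x : R) :
    (neg_slope (Num.max y 1) x)%:E @[y --> +oo%R] --> neg_slope_lim x.
  apply: cvg_trans; last exact: neg_slope_cvg x.
  by apply: near_eq_cvg; near=> y; rewrite max_l.
apply: cvg_trans; last apply: (@ge0_nondecreasing_integral_cvgy _ _ _ F setT
  (fun y x => (neg_slope (Num.max y 1) x)%:E)).
- apply: near_eq_cvg; near=> y; apply: eq_integral => x _.
  by rewrite max_l.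
- exact: measurableT.
- by move=> y; apply/measurable_EFinP; exact: measurable_neg_slope.
- by move=> y x _; rewrite lee_fin neg_slope_ge0.
- move=> x _ y z yz; rewrite lee_fin neg_slope_nondecreasing //.
  by rewrite ge_max !le_max yz lexx !orbT.
- by move=> x _; exact: max1_cvg.
Unshelve. all: by end_near.
Qed.

Lemma integral_psi_integrand (y : R) :
  F `]1%R, +oo[%classic \is a fin_num -> (1 <= y)%R ->
  \int[F]_x (psi_integrand y x)%:E =
  (fine (F `]1%R, +oo[%classic) / 2)%:E - y%:E * \int[F]_x (neg_slope y x)%:E.
Proof.
move=> Ftail y1; have y0 : (0 < y)%R := lt_le_trans ltr01 y1.
rewrite integralE; congr (_ - _).
  under eq_integral => x _.
    rewrite funeposE -EFin_max psi_integrand_pos //.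
    have -> : ((1 < x)%R%:R / 2 : R)%:E =
              (2^-1)%:E * (\1_(`]1%R, +oo[%classic) x : R)%:E.
      by rewrite indicE mem_setE in_itv /= andbT -EFinM mulrC.
    over.
  rewrite ge0_integralZl_EFin //; last first.
    by apply/measurable_EFinP; exact: measurable_indic.
  by rewrite integral_indic //= setIT -(fineK Ftail) -EFinM mulrC.
under eq_integral => x _.
  rewrite funenegE -EFinN -EFin_max psi_integrand_neg // EFinM.
  over.
rewrite ge0_integralZl_EFin ?ltW //.
  by move=> x _; rewrite lee_fin neg_slope_ge0.
by apply/measurable_EFinP; exact: measurable_neg_slope.
Qed.

Lemma psiX_slopeE (b c y : R) :
  F `]1%R, +oo[%classic \is a fin_num -> (1 <= y)%R ->
  psiX b c F y * (y^-1)%:E =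
  ((b * y - c * y ^+ 2 / 2 + fine (F `]1%R, +oo[%classic) / 2) / y)%:E -
  \int[F]_x (neg_slope y x)%:E.
Proof.
move=> Ftail y1; have y_neq0 : y != 0%R by rewrite gt_eqF // (lt_le_trans ltr01).
rewrite /psiX (integral_psi_integrand Ftail y1) addeA -EFinD muleBl //.
by rewrite -EFinM muleAC -EFinM mulfV // mul1e.
Qed.

Lemma integral_interval01_ge0 : 0 <= \int[F]_(x in `]0%R, 1%R]) (x : R)%:E.
Proof.
apply: integral_ge0 => x.
by rewrite /= in_itv /= => /andP[x0 _]; rewrite lee_fin ltW.
Qed.

Lemma psi_slope_limitE (b c : R) : psi_slope_limit b c F =
  (if (0 < c)%R then -oo else b%:E) - \int[F]_x neg_slope_lim x.
Proof.
rewrite integral_neg_slope_lim /psi_slope_limit.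
move: integral_interval01_ge0; case: (\int[F]_(x in _) _) => [r| |] // r0;
  case: (0 < c)%R; case: (0 < F _) => //=; rewrite ?adde0 ?oppe0 ?sube0 //.
by rewrite addr0.
Qed.

Lemma psi_slope_limit_lty (b c : R) : psi_slope_limit b c F < +oo.
Proof.
apply: le_lt_trans (ltry b); rewrite -[leRHS]sube0 -[leRHS]sube0.
apply: leeB; first by apply: leeB => //; exact: integral_interval01_ge0.
by case: ifP.
Qed.

End levy_measure.

Theorem lemmaC1 (R : realType) (b c : R)
    (F : {measure set R -> \bar R}) :
  0 <= c -> levy_measure F ->
  ((psiX b c F y * (y^-1)%:E)%E @[y --> +oo] --> psi_slope_limit b c F) /\
  (psi_slope_limit b c F < +oo)%E.
Proof.
move=> c0 levyF; split; last exact: psi_slope_limit_lty.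
have Ftail := levy_measure_tail_fin levyF.
have slope_def :
    ((if (0 < c)%R then -oo else b%:E) +? - \int[F]_x neg_slope_lim x)%E.
  case: ifP => _; last exact: fin_num_adde_defr.
  rewrite adde_defC adde_defEninfty eqe_oppLR /= gt_eqF //.
  apply: (lt_le_trans (ltNyr 0%R)); apply: integral_ge0 => x _.
  exact: neg_slope_lim_ge0.
have := cvgeD slope_def (drift_slope_cvg (fine (F `]1%R, +oo[%classic) / 2) c0)
  (cvgeN (integral_neg_slope_cvg (F:=F))).
rewrite -psi_slope_limitE => slope_cvg; apply: cvg_trans; last exact: slope_cvg.
by apply: near_eq_cvg; near=> y; rewrite psiX_slopeE.
Unshelve. all: by end_near.
Qed.
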